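(* Let $n_1,n_2,n^*_1,n^*_2$ be integers with $1\le n_1\le n^*_1\le n^*_2\le n_2$, $n=n_1+n_2$, $n^*=n^*_1+n^*_2$. Let $\psi_1$ be an Archimedean generator with $\phi_1=\psi_1^{-1}$, and $\lambda_1\ge\lambda_2>0$. Let $X_{n:n}(n_1,n_2)$ denote the maximum of $n$ dependent nonnegative random variables sharing an Archimedean copula with generator $\psi_1$, of which $n_1$ have distribution function $x\mapsto F_1(\lambda_1x)$ and $n_2$ have distribution function $x\mapsto F_2(\lambda_2x)$; and let $X_{n^*:n^*}(n^*_1,n^*_2)$ denote the maximum of $n^*$ dependent nonnegative random variables sharing an Archimedean copula with the same generator $\psi_1$, of which $n^*_1$ have distribution function $x\mapsto F_1(\lambda_1x)$ and $n^*_2$ have distribution function $x\mapsto F_2(\lambda_2x)$. Suppose $F_1(x)\ge F_2(x)$ for all $x$. Then $$(n_1,n_2)\succeq_{w}(n^*_1,n^*_2)\ \Longrightarrow\ X_{n^*:n^*}(n^*_1,n^*_2)\le_{st}X_{n:n}(n_1,n_2).$$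
   Context: Archimedean copula: a generator is a continuous nonincreasing $\psi:[0,\infty)\to[0,1]$ with $\psi(0)=1$, $\psi(\infty)=0$, which is $m$-monotone so that it generates an $m$-dimensional copula; $\phi=\psi^{-1}$. Random variables $Z_1,\dots,Z_m$ with marginal distribution functions $G_i$ share an Archimedean copula with generator $\psi$ if $P(Z_1\le z_1,\dots,Z_m\le z_m)=\psi\big(\sum_i\phi(G_i(z_i))\big)$. $F_1,F_2$ are baseline distribution functions of nonnegative random variables. For $\boldsymbol a,\boldsymbol b\in\mathbb R^k$ with increasingly ordered coordinates $a_{(1)}\le\dots\le a_{(k)}$: $\boldsymbol a\succeq_{w}\boldsymbol b$ means $\sum_{i=l}^k a_{(i)}\ge\sum_{i=l}^k b_{(i)}$ for all $l=1,\dots,k$. $U\le_{st}V$ means $P(U>x)\le P(V>x)$ for all $x$. *)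

From HB Require Import structures.
From mathcomp Require Import all_boot all_order all_algebra.
From mathcomp Require Import all_classical all_reals all_analysis.
Set Implicit Arguments. Unset Strict Implicit. Unset Printing Implicit Defensive.
Import Order.TTheory GRing.Theory Num.Theory.
Import numFieldNormedType.Exports.
Local Open Scope classical_set_scope.
Local Open Scope ring_scope.

Section Defs.
Variable R : realType.

(* m-monotonicity on [0,oo) (McNeil & Neslehova 2009): psi is (m-2) times
   differentiable on (0,oo), (-1)^k psi^(k) >= 0 for k = 0..m-2 on (0,oo),
   and (-1)^(m-2) psi^(m-2) is nonincreasing and convex on (0,oo)
   (for m = 1 only nonincreasingness is required). *)
Definition m_monotone (m : nat) (psi : R -> R) : Prop :=
  [/\ forall k, (k < m - 2)%N -> forall x, 0 < x -> derivable (derive1n k psi) x 1,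
      forall k, (k <= m - 2)%N -> forall x, 0 < x -> 0 <= (-1) ^+ k * derive1n k psi x,
      forall x y, 0 < x -> x <= y ->
        (-1) ^+ (m - 2) * derive1n (m - 2) psi y <= (-1) ^+ (m - 2) * derive1n (m - 2) psi x
    & (2 <= m)%N -> forall x y t, 0 < x -> 0 < y -> 0 <= t <= 1 ->
        (-1) ^+ (m - 2) * derive1n (m - 2) psi (t * x + (1 - t) * y)
        <= t * ((-1) ^+ (m - 2) * derive1n (m - 2) psi x)
           + (1 - t) * ((-1) ^+ (m - 2) * derive1n (m - 2) psi y)].

(* Archimedean generator of an m-dimensional copula (only its values on
   [0,oo) matter). *)
Definition arch_generator (m : nat) (psi : R -> R) : Prop :=
  [/\ {within [set x | 0 <= x], continuous psi}
      /\ (forall x y, 0 <= x -> x <= y -> psi y <= psi x),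
      forall x, 0 <= x -> 0 <= psi x <= 1,
      psi 0 = 1,
      psi x @[x --> +oo] --> (0 : R)
    & m_monotone m psi].

Definition psi_ext (psi : R -> R) (t : \bar R) : R :=
  match t with EFin r => psi r | _ => 0 end.

(* phi = psi^{-1}, the (generalized) inverse: phi u = inf {t >= 0 | psi t <= u},
   with value +oo when the set is empty (e.g. phi 0 = +oo for strict generators). *)
Definition phi_inv (psi : R -> R) (u : R) : \bar R :=
  ereal_inf [set (t%:E)%E | t in [set t | 0 <= t /\ psi t <= u]].

Definition nonneg_cdf (F : R -> R) : Prop :=
  [/\ forall x y, x <= y -> F x <= F y,
      forall x, F z @[z --> x^'+] --> F x,
      forall x, x < 0 -> F x = 0
    & F z @[z --> +oo] --> (1 : R)].

Definition archimedean_rv d (T : measurableType d) (P : probability T R)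
  (m : nat) (Z : 'I_m -> T -> R) (G : 'I_m -> R -> R) (psi : R -> R) : Prop :=
  [/\ forall i, measurable_fun setT (Z i),
      forall i x, P [set w | Z i w <= x] = (G i x)%:E
    & forall z : 'I_m -> R,
        P [set w | forall i, Z i w <= z i]
        = (psi_ext psi (\sum_(i < m) phi_inv psi (G i (z i)))%E)%:E].

Definition vmax d (T : measurableType d) (m : nat) (Z : 'I_m -> T -> R) (w : T)
  : \bar R := (\big[maxe/-oo]_(i < m) (Z i w)%:E)%E.

Definition two_sample_df (n1 n2 : nat) (F1 F2 : R -> R) (l1 l2 : R)
  : 'I_(n1 + n2) -> R -> R :=
  fun i x => if (i < n1)%N then F1 (l1 * x) else F2 (l2 * x).

End Defs.

(* weak (super)majorization a >=_w b for vectors of naturals: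
   with increasing rearrangements, sum_{i=l}^k a_(i) >= sum_{i=l}^k b_(i) for all l *)
Definition wmaj (a b : seq nat) : Prop :=
  size a = size b /\
  forall l : nat, (\sum_(x <- drop l (sort leq b)) x <= \sum_(x <- drop l (sort leq a)) x)%N.

Arguments two_sample_df {R} n1 n2 F1 F2 l1 l2 _ _.

From HB Require Import structures.
From mathcomp Require Import all_boot all_order all_algebra.
From mathcomp Require Import all_classical all_reals all_analysis.
Set Implicit Arguments. Unset Strict Implicit. Unset Printing Implicit Defensive.
Import Order.TTheory GRing.Theory Num.Theory.
Local Open Scope classical_set_scope.
Local Open Scope ring_scope.

(* For Z_1, ..., Z_m with an Archimedean copula and marginals G_i,
   P(max_i Z_i > x) = 1 - psi(sum_i phi(G_i x)).  With the two-sample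
   marginals the sum is n1 a + n2 b, where a = phi(F1(l1 x)) <= b = phi(F2(l2 x))
   because F2(l2 x) <= F1(l1 x) and phi is nonincreasing.  Weak majorization
   gives n*1 + n*2 <= n1 + n2 and n*2 <= n2, whence
   n*1 a + n*2 b <= n1 a + n2 b for 0 <= a <= b, and psi is nonincreasing. *)

Section ExtendedNatmul.
Variable R : realDomainType.
Local Open Scope ereal_scope.

Lemma enatmulD (a : \bar R) m n : a *+ (m + n) = a *+ m + a *+ n.
Proof. exact: mulrnDr. Qed.

Lemma lee_natmul (a b : \bar R) m n :
  0 <= a -> a <= b -> (m <= n)%N -> a *+ m <= b *+ n.
Proof. by move=> a0 ab mn; rewrite -!mule_natl lee_pmul // lee_fin ler_nat. Qed.

Lemma lee_natmulD2 (a b : \bar R) m1 m2 n1 n2 :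
  0 <= a -> a <= b -> (m2 <= n2)%N -> (m1 + m2 <= n1 + n2)%N ->
  a *+ m1 + b *+ m2 <= a *+ n1 + b *+ n2.
Proof.
move=> a0 ab le_m2n2 le_sum.
rewrite -(subnK le_m2n2) enatmulD addeA; apply: leeD2r.
apply: (@le_trans _ _ (a *+ (n1 + (n2 - m2)))).
  by rewrite lee_natmul // -(leq_add2r m2) -addnA subnK.
by rewrite enatmulD; apply: leeD2l; rewrite lee_natmul.
Qed.

End ExtendedNatmul.

Section Generator.
Variable R : realType.
Implicit Types (psi : R -> R) (u v : R).

Lemma phi_inv_ge0 psi u : (0 <= phi_inv psi u)%E.
Proof. by apply: le_ereal_inf_tmp => _ [t [t0 _] <-]; rewrite lee_fin. Qed.

Lemma le_phi_inv psi u v : u <= v -> (phi_inv psi v <= phi_inv psi u)%E.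
Proof.
move=> uv; apply: ereal_inf_le_tmp => _ [t [t0 psit] <-].
by exists t => //; split => //; apply: le_trans psit uv.
Qed.

Lemma le_psi_ext m psi (a b : \bar R) : arch_generator m psi ->
  (0 <= a)%E -> (a <= b)%E -> psi_ext psi b <= psi_ext psi a.
Proof.
case=> [[_ psi_anti] psi_range _ _ _].
case: a => [a| |] //; case: b => [b| |] //=; rewrite !lee_fin => a0.
- exact: psi_anti.
- by have /andP[] := psi_range a a0.
Qed.

End Generator.

Section MaximumTail.
Variables (R : realType) (d : measure_display) (T : measurableType d).

Lemma vmax_gt_setC m (Z : 'I_m -> T -> R) (x : R) :
  [set w | (x%:E < vmax Z w)%E] = ~` [set w | forall i, Z i w <= x].
Proof.
apply/seteqP; split => w /=.
- move=> + Z_le; apply/negP; rewrite -leNgt; apply/bigmax_leP.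
  by split => [|i _]; [exact: leNye | rewrite lee_fin].
- move=> Z_gt; rewrite ltNge; apply/negP => /bigmax_leP[_ Z_le].
  by apply: Z_gt => i; rewrite -lee_fin Z_le.
Qed.

Lemma measurable_all_le m (Z : 'I_m -> T -> R) (x : R) :
  (forall i, measurable_fun setT (Z i)) ->
  measurable [set w | forall i, Z i w <= x].
Proof.
move=> mZ; have -> : [set w | forall i, Z i w <= x] =
    \bigcap_(i in [set: 'I_m]) (setT `&` Z i @^-1` `]-oo, x]).
  apply/seteqP; split => w /= Z_le i.
  - by move=> _; split => //=; rewrite in_itv /= Z_le.
  - by have [_ /=] := Z_le i I; rewrite in_itv.
apply: fin_bigcap_measurable; first exact: finite_finset.
by move=> i _; apply: mZ => //; exact: measurable_itv.
Qed.

Lemma archimedean_rv_vmax_gt (P : probability T R) m (Z : 'I_m -> T -> R) G psi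
    (x : R) :
  archimedean_rv P Z G psi ->
  P [set w | (x%:E < vmax Z w)%E] =
  (1 - psi_ext psi (\sum_(i < m) phi_inv psi (G i x))%E)%:E.
Proof.
case=> mZ _ joint; rewrite vmax_gt_setC probability_setC.
  by rewrite (joint (fun=> x)) EFinB.
exact: measurable_all_le.
Qed.

End MaximumTail.

Section TwoSample.
Variables (R : realType) (F1 F2 : R -> R) (l1 l2 : R).

Lemma sum_phi_inv_two_sample_df n1 n2 psi x :
  (\sum_(i < n1 + n2) phi_inv psi (two_sample_df n1 n2 F1 F2 l1 l2 i x))%E =
  (phi_inv psi (F1 (l1 * x)) *+ n1 + phi_inv psi (F2 (l2 * x)) *+ n2)%E.
Proof.
rewrite big_split_ord /=; congr (_ + _)%E.
- under eq_bigr do rewrite /two_sample_df /= ltn_ord.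
  by rewrite sumr_const card_ord.
- under eq_bigr do rewrite /two_sample_df /= ltnNge leq_addr.
  by rewrite sumr_const card_ord.
Qed.

Lemma le_scaled_cdf x : nonneg_cdf F1 -> nonneg_cdf F2 ->
  (forall y, F2 y <= F1 y) -> 0 < l2 -> l2 <= l1 ->
  F2 (l2 * x) <= F1 (l1 * x).
Proof.
case=> _ _ F1_neg _ [F2_mono _ F2_neg _] F21 l2_gt0 l21.
have [x_ge0 | x_lt0] := leP 0 x.
  by apply: le_trans (F21 _); apply: F2_mono; rewrite ler_wpM2r.
rewrite F1_neg ?F2_neg // pmulr_rlt0 //; exact: lt_le_trans l21.
Qed.

End TwoSample.

Lemma wmaj2_sum (n1 n2 m1 m2 : nat) : (n1 <= n2)%N -> (m1 <= m2)%N ->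
  wmaj [:: n1; n2] [:: m1; m2] -> (m1 + m2 <= n1 + n2)%N.
Proof.
move=> n12 m12 [_ /(_ 0%N)]; rewrite !drop0.
rewrite !(@sorted_sort _ leq leq_trans) /= ?n12 ?m12 //.
by rewrite !big_cons !big_nil !addn0.
Qed.

Theorem theorem3p2 (R : realType) (n1 n2 ns1 ns2 : nat)
  (psi : R -> R) (l1 l2 : R) (F1 F2 : R -> R)
  (d : measure_display) (T : measurableType d) (P : probability T R)
  (X : 'I_(n1 + n2) -> T -> R)
  (ds : measure_display) (Ts : measurableType ds) (Ps : probability Ts R)
  (Xs : 'I_(ns1 + ns2) -> Ts -> R) :
  (1 <= n1)%N -> (n1 <= ns1)%N -> (ns1 <= ns2)%N -> (ns2 <= n2)%N ->
  arch_generator (n1 + n2) psi -> arch_generator (ns1 + ns2) psi ->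
  0 < l2 -> l2 <= l1 ->
  nonneg_cdf F1 -> nonneg_cdf F2 ->
  (forall x, F2 x <= F1 x) ->
  archimedean_rv P X (two_sample_df n1 n2 F1 F2 l1 l2) psi ->
  archimedean_rv Ps Xs (two_sample_df ns1 ns2 F1 F2 l1 l2) psi ->
  wmaj [:: n1; n2] [:: ns1; ns2] ->
  forall x : R,
    (Ps [set w | x%:E < vmax Xs w] <= P [set w | x%:E < vmax X w])%E.
Proof.
move=> _ n1_ns1 ns12 ns2_n2 _ gen_s l2_gt0 l21 cdf1 cdf2 F21 rvX rvXs wm x.
have n12 : (n1 <= n2)%N by rewrite (leq_trans n1_ns1) ?(leq_trans ns12).
have sum_le := wmaj2_sum n12 ns12 wm.
rewrite (archimedean_rv_vmax_gt x rvX) (archimedean_rv_vmax_gt x rvXs).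
rewrite !sum_phi_inv_two_sample_df lee_fin lerB // (le_psi_ext gen_s) //.
  by rewrite adde_ge0 // -mule_natl mule_ge0 ?lee_fin ?phi_inv_ge0.
apply: lee_natmulD2 => //; first exact: phi_inv_ge0.
by apply: le_phi_inv; apply: le_scaled_cdf.
Qed.
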